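(* Consider the auxiliary dynamics defined by the sets $\mathcal A^\alpha$, $\mathcal A^\alpha_i$ below, on the torus $\mathbb Z^d/L\mathbb Z^d$ for $L$ large. Then for every configuration $\eta$ and every $\alpha\in\{1,\dots,d\}$ the total current in direction $\alpha$ vanishes: $$\sum_{x}c^{\mathrm{aux}}_{x,x+e_\alpha}(\eta)\big(\eta(x)-\eta(x+e_\alpha)\big)=0.$$
   Context: For each $\alpha\in\{1,\dots,d\}$ let $\mathcal A^\alpha=\{x^\alpha_1,\dots,x^\alpha_{n_\alpha}\}\subset\mathbb Z^d$ be a finite set of distinct sites ordered so that $x^\alpha_i\cdot e_\alpha\ge x^\alpha_j\cdot e_\alpha$ whenever $i\le j$ ($e_1,\dots,e_d$ the standard basis), and set $\mathcal A^\alpha_i=\{x^\alpha_j+e_\alpha:1\le j\le i\}\cup\{x^\alpha_j:i+1\le j\le n_\alpha\}$, $0\le i\le n_\alpha$. Configurations are $\eta\in\{0,1\}^{\mathbb Z^d/L\mathbb Z^d}$ ($0$ = empty); sites are taken modulo $L$, with $L$ large enough that all the sets involved are embedded injectively. The auxiliary dynamics exchanges $x+x^\alpha_{i+1}$ and $x+x^\alpha_{i+1}+e_\alpha$ at rate $1$ whenever $x+\mathcal A^\alpha_i$ is empty ($0\le i<n_\alpha$, forward transitions), and exchanges $x+x^\alpha_i$ and $x+x^\alpha_i+e_\alpha$ at rate $1$ whenever $x+\mathcal A^\alpha_i$ is empty ($1\le i\le n_\alpha$, backward transitions). Equivalently, the rate of exchanging $x$ and $x+e_\alpha$ is $c^{\mathrm{aux}}_{x,x+e_\alpha}(\eta)=\#\{i\in\{0,\dots,n_\alpha-1\}:(x-x^\alpha_{i+1}+\mathcal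 A^\alpha_i)\setminus\{x\}\text{ is empty in }\eta\}$ whenever $\eta(x)\ne\eta(x+e_\alpha)$. *)

From mathcomp Require Import all_boot all_order all_algebra.
Set Implicit Arguments. Unset Strict Implicit. Unset Printing Implicit Defensive.
Import Order.TTheory GRing.Theory Num.Theory.
Local Open Scope ring_scope.

Definition site (d : nat) := {ffun 'I_d -> int}.

Definition vadd d (u v : site d) : site d := [ffun k => u k + v k].
Definition vsub d (u v : site d) : site d := [ffun k => u k - v k].
Definition ebasis d (a : 'I_d) : site d := [ffun k => ((k == a) : nat)%:Z].
Definition escale d (m : int) (a : 'I_d) : site d := [ffun k => m * ((k == a) : nat)%:Z].

(* Configurations on the torus Z^d / L Z^d, represented as L-periodic
   functions Z^d -> {0,1} (true = occupied, false = empty). *)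
Definition periodic d (L : nat) (eta : site d -> bool) : Prop :=
  forall (x : site d) (k : 'I_d), eta (vadd x (escale (L%:Z) k)) = eta x.

(* Given the list Aa = [x_1; ...; x_n] (x_j = nth 0 Aa (j-1)),
   A_i = {x_j + e_a : j <= i} U {x_j : j > i}. *)
Definition Aset d (a : 'I_d) (Aa : seq (site d)) (i : nat) : seq (site d) :=
  map (fun y => vadd y (ebasis a)) (take i Aa) ++ drop i Aa.

Definition empty_except d (eta : site d -> bool) (S : seq (site d)) (x : site d) : bool :=
  all (fun y => (y != x) ==> ~~ eta y) S.

(* c^aux_{x,x+e_a}(eta) = #{ i in {0..n-1} : (x - x_{i+1} + A_i) \ {x} is empty } *)
Definition caux d (a : 'I_d) (Aa : seq (site d)) (eta : site d -> bool) (x : site d) : nat :=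
  count (fun i => empty_except eta
                    (map (fun y => vadd (vsub x (nth 0 Aa i)) y) (Aset a Aa i)) x)
        (iota 0 (size Aa)).

Definition lift d L (x : {ffun 'I_d -> 'I_L}) : site d := [ffun k => ((x k : nat))%:Z].

Definition current d (L : nat) (a : 'I_d) (Aa : seq (site d)) (eta : site d -> bool) : int :=
  \sum_(x : {ffun 'I_d -> 'I_L})
     (caux a Aa eta (lift x))%:Z *
     (((eta (lift x)) : nat)%:Z - ((eta (vadd (lift x) (ebasis a))) : nat)%:Z).

From Pilot Require Import Defs.
From mathcomp Require Import all_boot all_order all_algebra.
From mathcomp Require Import zify.
Set Implicit Arguments. Unset Strict Implicit. Unset Printing Implicit Defensive.
Import Order.TTheory GRing.Theory Num.Theory.
Local Open Scope ring_scope.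

(* Let g_i(y) be the indicator that the translate y + A_i is empty.  Since
   A_i and A_{i+1} differ only in x_{i+1} versus x_{i+1} + e_a, and these are
   carried onto x and x + e_a by the translation y = x - x_{i+1}, the i-th
   contribution to c^aux_{x,x+e_a}(eta) (eta(x) - eta(x+e_a)) equals
   g_{i+1}(x - x_{i+1}) - g_i(x - x_{i+1}); the ordering of A^a is what keeps
   x_{i+1} out of {x_j + e_a : j <= i}.  Summed over the torus, translation
   invariance removes the shifts, the sum over i telescopes to
   sum_x g_n(x) - sum_x g_0(x), and this vanishes because A_n = A_0 + e_a. *)


Section SiteArithmetic.
Variable d : nat.
Implicit Types (u v w : site d) (m n : int) (k : 'I_d).

Lemma vaddE u v : vadd u v = u + v.
Proof. by apply/ffunP => k; rewrite !ffunE. Qed.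

Lemma vsubE u v : vsub u v = u - v.
Proof. by apply/ffunP => k; rewrite !ffunE. Qed.

Lemma escaleD m n k : escale (m + n) k = escale m k + escale n k.
Proof. by apply/ffunP => j; rewrite !ffunE mulrDl. Qed.

Lemma escale0 k : escale 0 k = 0.
Proof. by apply/ffunP => j; rewrite !ffunE mul0r. Qed.

Lemma site_decomp w : w = \sum_(k < d) escale (w k) k.
Proof.
apply/ffunP => j; rewrite sum_ffunE (bigD1 j) //= big1 => [|k /negPf kj].
  by rewrite !ffunE eqxx mulr1 addr0.
by rewrite ffunE eq_sym kj mulr0.
Qed.

End SiteArithmetic.

Section PeriodicFunction.
Variables (d L : nat) (V : Type) (F : site d -> V).
Hypothesis F_periodic : forall (x : site d) (k : 'I_d), F (x + escale L%:Z k) = F x.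

Lemma periodic_escale (m : int) (z : site d) (k : 'I_d) :
  F (z + escale (m * L%:Z) k) = F z.
Proof.
elim/int_rec: m z => [|n IH|n IH] z; first by rewrite mul0r escale0 addr0.
  by rewrite -[n.+1]addn1 PoszD mulrDl mul1r escaleD addrA F_periodic.
rewrite -(IH z) -(F_periodic _ k) -addrA -escaleD.
by rewrite -[n.+1]addn1 PoszD opprD mulrDl mulN1r addrNK.
Qed.

Lemma periodic_congr (z z' : site d) :
  (forall k, (L%:Z %| z' k - z k)%Z) -> F z' = F z.
Proof.
move=> Ldvd; have -> : z' = z + \sum_(k < d) escale ((z' - z) k) k.
  by rewrite -site_decomp addrC subrK.
have {Ldvd} : forall k, (L%:Z %| (z' - z) k)%Z by move=> k; rewrite !ffunE; apply: Ldvd.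
move: (z' - z) => w Ldvd.
elim/big_rec: _ z => [|k v _ IH] z; first by rewrite addr0.
by rewrite addrA IH -(divzK (Ldvd k)) periodic_escale.
Qed.

End PeriodicFunction.

Section Torus.
Variables d n : nat.
Local Notation torus := {ffun 'I_d -> 'I_n.+1}.

Definition torus_of (z : site d) : torus := [ffun k => inord (absz (z k %% n.+1)%Z)].

Lemma lift_torus_of (z : site d) k : Defs.lift (torus_of z) k = (z k %% n.+1)%Z.
Proof.
have mod_ge0 : (0 <= z k %% n.+1)%Z by rewrite modz_ge0.
rewrite !ffunE inordK; first by rewrite gez0_abs.
by rewrite -ltz_nat gez0_abs // ltz_pmod.
Qed.

Lemma torus_of_lift (x : torus) : torus_of (Defs.lift x) = x.
Proof.
apply/ffunP => k; apply: val_inj; rewrite ffunE /= ffunE modz_small /= ?inordK //.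
by rewrite ltz_nat.
Qed.

Lemma sum_torus_shift (V : nmodType) (F : site d -> V) (v : site d) :
  (forall (x : site d) (k : 'I_d), F (x + escale n.+1%:Z k) = F x) ->
  \sum_(x : torus) F (Defs.lift x + v) = \sum_(x : torus) F (Defs.lift x).
Proof.
move=> F_periodic; pose shift (x : torus) := torus_of (Defs.lift x + v).
have shift_inj : injective shift.
  move=> x1 x2 /(congr1 (@Defs.lift d n.+1)) /ffunP eq12.
  rewrite -(torus_of_lift x1) -(torus_of_lift x2); apply/ffunP => k; rewrite !ffunE.
  by have := eq12 k; rewrite !lift_torus_of !ffunE => /eqP; rewrite eqz_modDr => /eqP ->.
rewrite [RHS](reindex_inj shift_inj); apply: eq_bigr => x _.
apply: (@periodic_congr d n.+1 V F F_periodic) => k.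
by rewrite -eqz_mod_dvd lift_torus_of ffunE modz_mod.
Qed.

End Torus.

Definition vacant d (eta : site d -> bool) (S : seq (site d)) (y : site d) : bool :=
  all (fun w => ~~ eta (y + w)) S.

Lemma vacant_periodic d (L : nat) (eta : site d -> bool) S :
  periodic L eta -> forall (y : site d) (k : 'I_d),
  vacant eta S (y + escale L%:Z k) = vacant eta S y.
Proof.
move=> eta_periodic y k; apply: eq_all => w.
by rewrite addrAC -vaddE eta_periodic.
Qed.

Section ExchangeRate.
Variables (d : nat) (a : 'I_d) (X : seq (site d)).
Hypothesis X_uniq : uniq X.
Hypothesis X_ordered : pairwise (fun u v : site d => v a <= u a) X.
Variable i : nat.
Hypothesis lt_i_X : (i < size X)%N.
Local Notation p := (nth 0 X i).
Local Notation e := (ebasis a).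
Local Notation M := (map (fun w => w + e) (take i X)).
Local Notation D := (drop i.+1 X).

Lemma Aset_split : Aset a X i = M ++ p :: D.
Proof. by rewrite /Aset -drop_nth //; congr (_ ++ _); apply: eq_map => w; rewrite vaddE. Qed.

Lemma Aset_split_succ : Aset a X i.+1 = M ++ (p + e) :: D.
Proof.
rewrite /Aset (take_nth 0 lt_i_X) map_rcons cat_rcons vaddE.
by congr (_ ++ _); apply: eq_map => w; rewrite vaddE.
Qed.

Lemma nth_notin_drop : p \notin D.
Proof. by have := drop_uniq i X_uniq; rewrite (drop_nth 0 lt_i_X) => /andP[]. Qed.

Lemma nth_notin_shifted_take : p \notin M.
Proof.
apply/mapP => -[w w_take /ffunP /(_ a)].
move: X_ordered; rewrite -{1}(cat_take_drop i X) (drop_nth 0 lt_i_X).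
rewrite pairwise_cat allrel_consr => /and3P[/andP[/allP /(_ w w_take) /= le_pw _] _ _].
by rewrite !ffunE eqxx /= => pw_eq; move: le_pw; rewrite pw_eq; lia.
Qed.

Lemma empty_except_Aset (eta : site d -> bool) (z : site d) :
  empty_except eta (map (fun w => vadd (vsub z p) w) (Aset a X i)) z =
  vacant eta M (z - p) && vacant eta D (z - p).
Proof.
have addK_eq w : (z - p + w == z) = (w == p).
  apply/eqP/eqP => [sum_eq|->]; last exact: subrK.
  by rewrite -(addKr (z - p) w) sum_eq opprB subrK.
have vacant_off S : p \notin S ->
    all (fun w => (z - p + w != z) ==> ~~ eta (z - p + w)) S = vacant eta S (z - p).
  move=> pS; apply: eq_in_all => w wS; rewrite addK_eq.
  by case: eqP wS => // ->; rewrite (negPf pS).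
rewrite /empty_except (eq_map (vaddE (vsub z p))) vsubE all_map Aset_split.
rewrite all_cat /= addK_eq eqxx /=.
by rewrite -vacant_off ?nth_notin_shifted_take // -vacant_off ?nth_notin_drop.
Qed.

Lemma exchange_rate_telescope (eta : site d -> bool) (z : site d) :
  (empty_except eta (map (fun w => vadd (vsub z p) w) (Aset a X i)) z : nat)%:Z
    * ((eta z : nat)%:Z - (eta (vadd z e) : nat)%:Z)
  = (vacant eta (Aset a X i.+1) (z - p) : nat)%:Z
    - (vacant eta (Aset a X i) (z - p) : nat)%:Z.
Proof.
rewrite empty_except_Aset Aset_split_succ Aset_split /vacant !all_cat /=.
rewrite subrK addrA subrK vaddE.
by case: (all _ M); case: (all _ D); case: (eta z); case: (eta (z + e)).
Qed.

End ExchangeRate.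

Lemma natz_count (T : Type) (P : pred T) (s : seq T) :
  (count P s)%:Z = \sum_(t <- s) (P t : nat)%:Z.
Proof. by elim: s => [|t s IH]; rewrite ?big_nil // big_cons /= PoszD IH. Qed.

Section Current.
Variables (d : nat) (a : 'I_d) (X : seq (site d)).
Hypothesis X_uniq : uniq X.
Hypothesis X_ordered : pairwise (fun u v : site d => v a <= u a) X.
Variable eta : site d -> bool.

Local Notation g j y := (vacant eta (Aset a X j) y : nat)%:Z.

Lemma caux_flux_telescope (x : site d) :
  (caux a X eta x)%:Z * ((eta x : nat)%:Z - (eta (vadd x (ebasis a)) : nat)%:Z) =
  \sum_(0 <= i < size X) (g i.+1 (x - nth 0 X i) - g i (x - nth 0 X i)).
Proof.
rewrite /caux natz_count mulr_suml /index_iota subn0.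
apply: eq_big_seq => i; rewrite mem_iota add0n => /andP[_ lt_i_X].
exact: exchange_rate_telescope.
Qed.

Lemma Aset_last : Aset a X (size X) = map (fun w => w + ebasis a) X.
Proof. by rewrite /Aset take_size drop_size cats0; apply: eq_map => w; rewrite vaddE. Qed.

Lemma current_eq0 (n : nat) : periodic n.+1 eta -> current n.+1 a X eta = 0.
Proof.
move=> eta_periodic; pose S j := \sum_(x : {ffun 'I_d -> 'I_n.+1}) g j (Defs.lift x).
have sum_shift j v : \sum_(x : {ffun 'I_d -> 'I_n.+1}) g j (Defs.lift x + v) = S j.
  by apply: (sum_torus_shift (F := fun y => g j y)) => y k; rewrite vacant_periodic.
rewrite /current (eq_bigr _ (fun x _ => caux_flux_telescope _)) exchange_big /=.
under eq_bigr do rewrite sumrB !sum_shift.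
rewrite telescope_sumr //; apply/eqP; rewrite subr_eq0 -(sum_shift 0%N (ebasis a)).
rewrite /S Aset_last; apply/eqP/eq_bigr => x _; congr (Posz (nat_of_bool _)).
rewrite /vacant /Aset take0 drop0 /= all_map.
by apply: eq_all => w /=; rewrite [w + _]addrC addrA.
Qed.

End Current.

Theorem mainTheorem6 (d : nat) (A : 'I_d -> seq (site d))
  (Hdistinct : forall a : 'I_d, uniq (A a))
  (Hordered : forall a : 'I_d, pairwise (fun u v : site d => v a <= u a) (A a)) :
  exists L0 : nat, forall L : nat, (L0 <= L)%N ->
    forall eta : site d -> bool, periodic L eta ->
    forall a : 'I_d, current L a (A a) eta = 0.
Proof.
exists 1%N => -[|n] // _ eta eta_periodic a.
exact: (current_eq0 (Hdistinct a) (Hordered a) eta_periodic).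
Qed.
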